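(* There are constants $c,\beta\ge 0$ such that for all sufficiently large $n$ and every integer $k>\frac{4}{7}n+c$, the pair $(n,k)$ is $(2,\beta)$-approx good.
   Context: All graphs are undirected and unweighted. For a graph $G=(V,E)$ and integer $k$, a $k$-spanner of $G$ is a subgraph $H=(V,E')$, $E'\subseteq E$, with $\mathrm{dist}_H(u,v)\le k\cdot\mathrm{dist}_G(u,v)$ for all $u,v\in V$. Girth = length of a shortest cycle ($+\infty$ if acyclic). For constants $\alpha>1,\beta\ge 0$, a pair $(n,k)$ is $(\alpha,\beta)$-approx good if every connected $n$-vertex graph $G$ has a $k$-spanner $H=(V,E_H)$ with girth at least $k+2$ such that $|E_H|-n\le \alpha(\mathsf{OPT}-n)+\beta$, where $\mathsf{OPT}$ is the number of edges of a minimum (fewest-edge) $k$-spanner of $G$. *)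

From mathcomp Require Import all_boot all_order all_algebra.
Set Implicit Arguments. Unset Strict Implicit. Unset Printing Implicit Defensive.
Import Order.TTheory GRing.Theory Num.Theory.

Section Graphs.
Variable n : nat.
Implicit Types G H : rel 'I_n.

Definition simple_graph G := symmetric G /\ irreflexive G.

Definition connected_graph G := forall u v : 'I_n, connect G u v.

Definition subgraph H G := symmetric H /\ subrel H G.

Definition nedges G : nat :=
  #|[set p : 'I_n * 'I_n | (p.1 < p.2)%N && G p.1 p.2]|.

Definition walk_len G (u v : 'I_n) (d : nat) :=
  exists p : seq 'I_n, [/\ size p = d, path G u p & last u p = v].

Definition is_dist G (u v : 'I_n) (d : nat) :=
  walk_len G u v d /\ forall d', walk_len G u v d' -> (d <= d')%N.

(* dist_H(u,v) <= k dist_G(u,v) for all u,v (with dist = +oo when no walk) *)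
Definition is_spanner G H (k : nat) :=
  subgraph H G /\
  forall u v d, is_dist G u v d -> exists d', is_dist H u v d' /\ (d' <= k * d)%N.

Definition is_graph_cycle H (c : seq 'I_n) := [/\ uniq c, (3 <= size c)%N & cycle H c].

(* girth(H) >= g  (vacuous if acyclic, girth = +oo) *)
Definition girth_ge H (g : nat) :=
  forall c, is_graph_cycle H c -> (g <= size c)%N.

Definition is_opt G (k m : nat) :=
  (exists H, is_spanner G H k /\ nedges H = m) /\
  forall H, is_spanner G H k -> (m <= nedges H)%N.

End Graphs.

Local Open Scope ring_scope.

Definition approx_good (alpha beta : rat) (n k : nat) :=
  forall G : rel 'I_n, simple_graph G -> connected_graph G ->
  exists H : rel 'I_n, [/\ is_spanner G H k, girth_ge H k.+2 &
    forall opt, is_opt G k opt ->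
      (nedges H)%:R - n%:R <= alpha * (opt%:R - n%:R) + beta].

(* Let H be a largest subgraph of G of girth at least k+2. Adding a further
   edge uv of G closes a cycle of length at most k+1, so dist_H(u,v) <= k and H
   is a k-spanner. Every k-spanner of a connected graph is connected, so
   OPT >= n-1, and it suffices that H has at most n+2 edges. Otherwise pick a
   set F of n+3 edges of H. Its even-degree subsets form a GF(2)-space W with
   at least 2^(|F|-n) = 8 elements, as the set of odd-degree vertices takes at
   most 2^n values and each fibre is a coset of W. A nonempty X in W contains a
   cycle through at most |X| vertices, so |X| >= g >= k+2, while every edge of
   F lies in at most half of W. Double counting gives
   g(|W|-1) <= (n+3)|W|/2, hence 7g <= 4(n+3), contradicting k > 4n/7. *)

From mathcomp Require Import all_boot all_order all_algebra.
From mathcomp Require Import zify lra.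
From Stdlib Require Import Classical Wf_nat.
Import Order.TTheory GRing.Theory Num.Theory.
Set Implicit Arguments. Unset Strict Implicit. Unset Printing Implicit Defensive.

Lemma classic_ex_min (P : nat -> Prop) m :
  P m -> exists2 k, P k & forall j, P j -> (k <= j)%N.
Proof.
move=> Pm; have [k [[Pk kmin] _]] := dec_inh_nat_subset_has_unique_least_element
  P (fun j => classic (P j)) (ex_intro _ m Pm).
by exists k => // j /kmin /ssrnat.leP.
Qed.

Lemma classic_ex_max (P : nat -> Prop) b m :
  P m -> (forall j, P j -> (j <= b)%N) ->
  exists2 k, P k & forall j, P j -> (j <= k)%N.
Proof.
move=> Pm Pb.
have [_ [k Pk ->] kmin] := @classic_ex_min (fun i => exists2 k, P k & i = b - k)
  (b - m) (ex_intro2 _ _ m Pm erefl).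
exists k => // j Pj; have := kmin _ (ex_intro2 _ _ j Pj erefl).
by have := Pb _ Pj; have := Pb _ Pk; lia.
Qed.

Section Walks.
Variable n : nat.
Implicit Types (G H : rel 'I_n) (u v w : 'I_n).

Lemma walk_len0 H u : walk_len H u u 0.
Proof. by exists [::]. Qed.

Lemma walk_len1 H u v : H u v -> walk_len H u v 1.
Proof. by move=> Huv; exists [:: v]; rewrite /= Huv. Qed.

Lemma walk_lenD H u w v d1 d2 :
  walk_len H u w d1 -> walk_len H w v d2 -> walk_len H u v (d1 + d2).
Proof.
move=> [p1 [<- p1H <-]] [p2 [<- p2H <-]]; exists (p1 ++ p2).
by rewrite size_cat cat_path last_cat p1H p2H.
Qed.

Lemma walk_len_sym H u v d :
  symmetric H -> walk_len H u v d -> walk_len H v u d.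
Proof.
move=> symH [p [<- pH <-]]; exists (rev (belast u p)); split.
- by rewrite size_rev size_belast.
- by rewrite rev_path; apply: sub_path pH => x y /=; rewrite symH.
- by case: p {pH} => [|x p] //=; rewrite rev_cons last_rcons.
Qed.

Lemma connect_walk_len H u v : connect H u v <-> exists d, walk_len H u v d.
Proof.
split=> [/connectP[p pH ->]|[d [p [_ pH <-]]]]; last by apply/connectP; exists p.
by exists (size p), p.
Qed.

Lemma walk_len_dist H u v d :
  walk_len H u v d -> exists2 d', is_dist H u v d' & (d' <= d)%N.
Proof.
move=> walk; have [d' walk' min'] := classic_ex_min walk.
by exists d' => //; apply: min'.
Qed.

Lemma edge_stretch_spanner G H k : subgraph H G ->
  (forall u v, G u v -> exists2 d, (d <= k)%N & walk_len H u v d) ->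
  is_spanner G H k.
Proof.
move=> subHG stretch; split=> // u v _ [[p [<- pG <-]] _].
suff [d1 le_d1 walk1] : exists2 d1, (d1 <= k * size p)%N & walk_len H u (last u p) d1.
  have [d' dist' le_d'] := walk_len_dist walk1.
  by exists d'; split=> //; apply: leq_trans le_d1.
elim: p u pG => [|x p IHp] u /=; first by exists 0 => //; apply: walk_len0.
move=> /andP[Gux pG]; have [d2 le_d2 walk2] := IHp _ pG.
have [d1 le_d1 walk1] := stretch _ _ Gux.
by exists (d1 + d2); [rewrite mulnS leq_add | apply: walk_lenD walk1 walk2].
Qed.

Lemma spanner_connected G H k :
  connected_graph G -> is_spanner G H k -> connected_graph H.
Proof.
move=> connG [_ spanH] u v; apply/connect_walk_len.
have /connect_walk_len[d /walk_len_dist[dG distG _]] := connG u v.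
by have [d' [[walk' _] _]] := spanH _ _ _ distG; exists d'.
Qed.

End Walks.

Section GirthSpanner.
Variable n : nat.
Implicit Types (G H : rel 'I_n) (u v : 'I_n).

Definition add_edge H u v : rel 'I_n :=
  fun a b => [|| H a b, (a, b) == (u, v) | (a, b) == (v, u)].

Lemma add_edge_other H u v a b :
  (a, b) != (u, v) -> (a, b) != (v, u) -> add_edge H u v a b = H a b.
Proof. by rewrite /add_edge => /negbTE-> /negbTE->; rewrite !orbF. Qed.

Lemma add_edge_sym H u v : symmetric H -> symmetric (add_edge H u v).
Proof.
move=> symH a b; rewrite /add_edge symH !xpair_eqE.
by case: (a == u); case: (a == v); case: (b == u); case: (b == v); rewrite ?orbF ?orbT.
Qed.

Lemma add_edge_avoid H u v : {in predC1 u &, subrel (add_edge H u v) H}.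
Proof.
move=> a b; rewrite !inE => au bu.
by rewrite add_edge_other // xpair_eqE negb_and ?au ?bu ?orbT.
Qed.

Lemma add_edge_cycle_through H u v x p : symmetric H -> u != v ->
  uniq [:: u, x & p] -> (0 < size p)%N -> cycle (add_edge H u v) [:: u, x & p] ->
  cycle H [:: u, x & p] \/ walk_len H u v (size p).+1.
Proof.
move=> symH neq_uv /andP[u_notin_xp uniq_xp] p_gt0.
rewrite /= rcons_path => /andP[Eux /andP[Exp Eyu]].
have xpH : path H x p.
  apply: (sub_in_path (@add_edge_avoid H u v)) Exp; apply/allP=> y y_xp /=.
  by apply: contraNneq u_notin_xp => <-.
set y := last x p in Eyu *.
have neq_yu : y != u by apply: contraNneq u_notin_xp => <-; apply: mem_last.
have neq_xy : x != y.
  apply/eqP=> eq_xy; have := index_last uniq_xp.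
  by rewrite -/y -eq_xy /= eqxx => p0; rewrite -p0 in p_gt0.
have Hux : x != v -> H u x.
  move=> neq_xv; move: Eux.
  by rewrite add_edge_other // !xpair_eqE !negb_and ?neq_xv ?neq_uv ?orbT.
have [eq_yv|neq_yv] := eqVneq y v.
  by right; exists (x :: p); rewrite /= Hux ?xpH // -eq_yv.
have Hyu : H y u.
  by move: Eyu; rewrite add_edge_other // !xpair_eqE !negb_and ?neq_yu ?neq_yv ?orbT.
have [eq_xv|neq_xv] := eqVneq x v.
  right; apply: walk_len_sym => //; exists (rcons p u).
  by rewrite size_rcons last_rcons rcons_path -eq_xv xpH.
by left; rewrite /= rcons_path Hux // xpH Hyu.
Qed.

Lemma add_edge_cycle H u v c : symmetric H -> u != v ->
  is_graph_cycle (add_edge H u v) c ->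
  is_graph_cycle H c \/ exists2 d, (d < size c)%N & walk_len H u v d.
Proof.
move=> symH neq_uv [uniq_c size_c cycle_c].
have [u_c|u_notin_c] := boolP (u \in c); last first.
  left; split=> //; apply: (sub_in_cycle (@add_edge_avoid H u v)) cycle_c.
  by apply/allP=> x x_c /=; apply: contraNneq u_notin_c => <-.
have [i p' rot_c] := rot_to u_c.
case: p' rot_c => [|x p] rot_c; first by move: size_c; rewrite -(size_rot i) rot_c.
have size_cp : size c = (size p).+2 by rewrite -(size_rot i c) rot_c.
have uniq_xp : uniq [:: u, x & p] by rewrite -rot_c rot_uniq.
have cycle_xp : cycle (add_edge H u v) [:: u, x & p] by rewrite -rot_c rot_cycle.
have p_gt0 : (0 < size p)%N by rewrite -2!ltnS -size_cp.
case: (add_edge_cycle_through symH neq_uv uniq_xp p_gt0 cycle_xp) => [cycleH | walk].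
  by left; split=> //; rewrite -(rot_cycle i) rot_c.
by right; exists (size p).+1; rewrite ?size_cp.
Qed.

Lemma add_edge_stretch H u v k : symmetric H -> girth_ge H k.+2 -> u != v ->
  ~ girth_ge (add_edge H u v) k.+2 -> exists2 d, (d <= k)%N & walk_len H u v d.
Proof.
move=> symH girthH neq_uv not_girth.
have [c cycle_c short_c] :
    exists2 c, is_graph_cycle (add_edge H u v) c & (size c <= k.+1)%N.
  apply: NNPP => no_c; apply: not_girth => c cycle_c; rewrite leqNgt.
  by apply/negP => short_c; apply: no_c; exists c.
have [/girthH|[d lt_d walk_d]] := add_edge_cycle symH neq_uv cycle_c.
  by rewrite leqNgt ltnS short_c.
by exists d => //; rewrite -ltnS (leq_trans lt_d).
Qed.

Definition rel_of_set (S : {set 'I_n * 'I_n}) : rel 'I_n := fun a b => (a, b) \in S.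

Lemma girth_spanner_exists G k : simple_graph G -> (0 < k)%N ->
  exists H, is_spanner G H k /\ girth_ge H k.+2.
Proof.
move=> [symG irrG] k_gt0.
pose ok S := [/\ symmetric (rel_of_set S), subrel (rel_of_set S) G
                & girth_ge (rel_of_set S) k.+2].
have [_ [S [symS subSG girthS] ->] maxS] : exists2 m, (exists2 S, ok S & m = #|S|) &
    forall m', (exists2 S, ok S & m' = #|S|) -> (m' <= m)%N.
  apply: (classic_ex_max (b := #|{: 'I_n * 'I_n}|) (m := 0)); last first.
    by move=> _ [S _ ->]; apply: max_card.
  exists set0; rewrite ?cards0 //.
  by split=> [a b|a b|[|x [|y c]] [_ //]]; rewrite /= /rel_of_set !inE.
exists (rel_of_set S); split=> //.
apply: edge_stretch_spanner => [|u v Guv]; first by split.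
have [uvS|uv_notin_S] := boolP ((u, v) \in S).
  by exists 1 => //; apply: walk_len1.
have neq_uv : u != v by apply: contraTneq Guv => ->; rewrite irrG.
apply: add_edge_stretch => // girth_add.
pose S' := (u, v) |: ((v, u) |: S).
have relS' : rel_of_set S' =2 add_edge (rel_of_set S) u v.
  by move=> a b; rewrite /rel_of_set !inE orbA orbC.
have grow : (#|S| < #|S'|)%N.
  apply: leq_trans (subset_leq_card (setUS _ (subsetUr _ _))).
  by rewrite cardsU1 uv_notin_S.
suff : (#|S'| <= #|S|)%N by rewrite leqNgt grow.
apply: maxS; exists S' => //; split=> [a b|a b|c].
- by rewrite !relS' add_edge_sym.
- by rewrite relS' => /or3P[/subSG | /eqP[-> ->] | /eqP[-> ->]] //; rewrite symG.
- by rewrite /is_graph_cycle (eq_cycle relS'); apply: girth_add.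
Qed.
End GirthSpanner.

Section SymDiff.
Variable T : finType.
Implicit Types A B C : {set T}.

Definition symdiff A B : {set T} := [set x | (x \in A) (+) (x \in B)].

Lemma symdiffK B : cancel (symdiff^~ B) (symdiff^~ B).
Proof. by move=> A; apply/setP=> x; rewrite !inE; case: (x \in A); case: (x \in B). Qed.

Lemma symdiff_eq0 A B : (symdiff A B == set0) = (A == B).
Proof.
apply/eqP/eqP=> [AB0|->]; last by apply/setP=> x; rewrite !inE addbb.
apply/setP=> x; have /setP/(_ x) := AB0; rewrite !inE.
by case: (x \in A); case: (x \in B).
Qed.

Lemma subset_symdiff A B C : A \subset C -> B \subset C -> symdiff A B \subset C.
Proof.
move=> /subsetP AC /subsetP BC; apply/subsetP=> x; rewrite inE.
by case: (boolP (x \in A)) => [/AC | _ /BC].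
Qed.

Lemma odd_card_symdiff A B : odd #|symdiff A B| = odd #|A| (+) odd #|B|.
Proof.
have AIB_sub : A :&: B \subset A :|: B := subset_trans (subsetIl A B) (subsetUl A B).
have -> : symdiff A B = (A :|: B) :\: (A :&: B).
  by apply/setP=> x; rewrite !inE; case: (x \in A); case: (x \in B).
by rewrite cardsDS // oddB ?subset_leq_card // -oddD cardsUI oddD.
Qed.

End SymDiff.

Section BranchingCycle.
Variables (T : finType) (R : rel T).
Hypotheses (symR : symmetric R) (irrR : irreflexive R).
Hypothesis branching : forall t x, R t x -> exists2 y, R t y & y != x.

Lemma branching_cycle a b :
  R a b -> exists c, [/\ uniq c, (3 <= size c)%N & cycle R c].
Proof.
move=> Rab.
pose long m := exists t p, [/\ uniq (t :: p), path R t p & size p = m].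
have long1 : long 1.
  exists a, [:: b]; rewrite /= Rab inE andbT; split=> //.
  by apply: contraTneq Rab => ->; rewrite irrR.
have [_ [t [p [uniq_tp path_tp <-]]] maxm] :
    exists2 m, long m & forall m', long m' -> (m' <= m)%N.
  apply: (classic_ex_max (b := #|T|) long1) => _ [t [p [uniq_tp _ <-]]].
  by have := max_card (mem (t :: p)); rewrite (card_uniqP uniq_tp) => /ltnW.
case: p uniq_tp path_tp maxm => [|x r] uniq_tp path_tp maxm.
  by have := maxm 1 long1.
have /andP[Rtx _] := path_tp.
have [y Rty neq_yx] := branching Rtx.
have neq_yt : y != t by apply: contraTneq Rty => ->; rewrite irrR.
have [y_xr|y_notin_xr] := boolP (y \in x :: r); last first.
  have : long (size (x :: r)).+1.
    exists y, [:: t, x & r]; split=> //.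
      by rewrite cons_uniq inE negb_or neq_yt y_notin_xr uniq_tp.
    by move: path_tp; rewrite /= (symR y) Rty => ->.
  by move/maxm; rewrite ltnn.
move: uniq_tp path_tp; move: y_xr; rewrite inE (negbTE neq_yx) orFb => /splitPr[r1 r2].
rewrite -cat_rcons -!cat_cons cat_uniq cat_path => /and3P[uniq_c _ _] /andP[path_c _].
exists [:: t, x & rcons r1 y]; split=> //; first by rewrite /= size_rcons.
change (path R t (rcons (x :: rcons r1 y) t)).
by rewrite rcons_path path_c /= last_rcons (symR y) Rty.
Qed.

End BranchingCycle.

Section EdgeSets.
Variable n : nat.
Local Notation edge := ('I_n * 'I_n)%type.
Implicit Types (X Y F : {set edge}) (C D : {set 'I_n}) (H S : rel 'I_n) (t w : 'I_n).

Definition edge_set H : {set edge} := [set e : edge | (e.1 < e.2)%N && H e.1 e.2].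

Definition incident w : {set edge} := [set e : edge | (e.1 == w) || (e.2 == w)].
Definition deg X w := #|X :&: incident w|.
Definition odd_vertices X := [set w | odd (deg X w)].
Definition eulerian X := odd_vertices X == set0.

Lemma eulerianP X : reflect (forall w, ~~ odd (deg X w)) (eulerian X).
Proof.
apply: (iffP eqP) => [oddX0 w | evenX]; last first.
  by apply/setP=> w; rewrite !inE (negbTE (evenX w)).
by apply/negP=> odd_w; have := in_set0 w; rewrite -oddX0 inE odd_w.
Qed.

Lemma odd_vertices_symdiff X Y :
  odd_vertices (symdiff X Y) = symdiff (odd_vertices X) (odd_vertices Y).
Proof.
apply/setP=> w; rewrite !inE /deg -odd_card_symdiff; congr (odd _).
by apply: eq_card => e; rewrite !inE; case: (e \in X); case: (e \in Y); case: (_ || _).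
Qed.

Lemma eulerian_symdiff X Y :
  eulerian (symdiff X Y) = (odd_vertices X == odd_vertices Y).
Proof. by rewrite /eulerian odd_vertices_symdiff symdiff_eq0. Qed.

Lemma handshake X :
  {in X, forall e : edge, e.1 != e.2} -> \sum_w deg X w = 2 * #|X|.
Proof.
move=> loopless.
have -> : \sum_w deg X w = \sum_w \sum_(e in X) (e \in incident w : nat).
  apply: eq_bigr => w _; rewrite /deg -sum1_card big_mkcond [RHS]big_mkcond /=.
  by apply: eq_bigr => e _; rewrite !inE; case: (e \in X).
rewrite exchange_big /= -sum1_card big_distrr /=; apply: eq_bigr => e eX.
rewrite muln1; have := cards2 e.1 e.2; rewrite loopless // => <-.
rewrite -sum1_card [RHS]big_mkcond /=.
by apply: eq_bigr => w _; rewrite !inE ![w == _]eq_sym; case: (_ || _).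
Qed.

Definition adj X : rel 'I_n := fun a b => ((a, b) \in X) || ((b, a) \in X).

Lemma adj_sym X : symmetric (adj X).
Proof. by move=> a b; rewrite /adj orbC. Qed.

Lemma adj_deg_gt0 X a b : adj X a b -> (0 < deg X a)%N.
Proof.
by case/orP=> [ab|ba]; apply/card_gt0P; [exists (a, b) | exists (b, a)];
  rewrite !inE ?ab ?ba eqxx ?orbT.
Qed.

Definition opposite t (e : edge) : 'I_n := if e.1 == t then e.2 else e.1.

Lemma incident_opposite t e :
  e \in incident t -> e = (t, opposite t e) \/ e = (opposite t e, t).
Proof.
case: e => a b; rewrite inE /opposite /=.
by case: eqP => [-> | _ /eqP ->]; [left | right].
Qed.

Section EulerianEdgeSet.
Variable X : {set edge}.
Hypothesis X_oriented : forall e, e \in X -> (e.1 < e.2)%N.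
Hypothesis X_eulerian : eulerian X.

Lemma adj_irr : irreflexive (adj X).
Proof. by move=> a; rewrite /adj orbb; apply/negP=> /X_oriented; rewrite ltnn. Qed.

Lemma opposite_inj t : {in X :&: incident t &, injective (opposite t)}.
Proof.
move=> e e' /setIP[eX /incident_opposite e_t] /setIP[e'X /incident_opposite e'_t] eq_op.
rewrite eq_op in e_t.
move: (opposite t e') e_t e'_t (X_oriented eX) (X_oriented e'X) => y.
by case=> ->; case=> -> //= lt1 lt2; have := ltn_trans lt1 lt2; rewrite ltnn.
Qed.

Lemma adj_opposite t e : e \in X :&: incident t -> adj X t (opposite t e).
Proof.
by case/setIP=> eX /incident_opposite[e_def|e_def]; rewrite /adj -e_def eX ?orbT.
Qed.

Lemma eulerian_branching t x : adj X t x -> exists2 y, adj X t y & y != x.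
Proof.
move=> Atx.
have [e1 e1_t opp_e1] : exists2 e1, e1 \in X :&: incident t & opposite t e1 = x.
  have neq_xt : x != t by apply: contraTneq Atx => ->; rewrite adj_irr.
  by case/orP: Atx => [tx|xt]; [exists (t, x) | exists (x, t)];
    rewrite /opposite ?inE /= ?tx ?xt ?eqxx ?orbT ?(negbTE neq_xt).
have deg_gt1 : (1 < deg X t)%N.
  have : (0 < deg X t)%N by apply/card_gt0P; exists e1.
  by have := (elimT (eulerianP X) X_eulerian) t; case: (deg X t) => [|[|d]].
have : (0 < #|opposite t @: (X :&: incident t) :\ x|)%N.
  rewrite -(ltn_add2l (x \in opposite t @: (X :&: incident t))) addn0 -cardsD1.
  rewrite card_in_imset; last exact: opposite_inj.
  exact: leq_ltn_trans (leq_b1 _) deg_gt1.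
case/card_gt0P=> y; rewrite in_setD1 => /andP[neq_yx /imsetP[e e_t y_def]].
by exists y; rewrite // y_def; apply: adj_opposite.
Qed.

Lemma card_support_le : (#|[set w | (0 < deg X w)%N]| <= #|X|)%N.
Proof.
have loopless : {in X, forall e : edge, e.1 != e.2}.
  by move=> e /X_oriented; apply: contraTneq => ->; rewrite ltnn.
rewrite -(leq_pmul2l (isT : 0 < 2)%N) -handshake // -sum1_card big_distrr big_mkcond /=.
apply: leq_sum => w _; rewrite inE muln1.
by have := (elimT (eulerianP X) X_eulerian) w; case: (deg X w) => [|[|d]].
Qed.

Lemma eulerian_short_cycle a b : adj X a b ->
  exists2 c, is_graph_cycle (adj X) c & (size c <= #|X|)%N.
Proof.
move=> Aab; have [c [uniq_c size_c cycle_c]] :=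
  branching_cycle (@adj_sym X) adj_irr eulerian_branching Aab.
exists c => //; apply: leq_trans card_support_le.
rewrite -(card_uniqP uniq_c); apply/subset_leq_card/subsetP => z z_c.
by rewrite inE; apply: (@adj_deg_gt0 X z (next c z)); apply: next_cycle cycle_c z_c.
Qed.

End EulerianEdgeSet.

Lemma girth_le_card_eulerian H g X : symmetric H -> girth_ge H g ->
  X \subset edge_set H -> eulerian X -> X != set0 -> (g <= #|X|)%N.
Proof.
move=> symH girthH /subsetP XH eulX /set0Pn[[a b] abX].
have X_oriented e : e \in X -> (e.1 < e.2)%N by move=> /XH; rewrite inE => /andP[].
have Aab : adj X a b by rewrite /adj abX.
have [c [uniq_c size_c cycle_c] le_c] := eulerian_short_cycle X_oriented eulX Aab.
apply: leq_trans le_c; apply: girthH; split=> //; apply: sub_cycle cycle_c.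
by move=> u v /orP[] /XH; rewrite inE => /andP[_] //=; rewrite symH.
Qed.

Definition cycle_space F := [set X in powerset F | eulerian X].

Lemma symdiff_in_cycle_space F X Y : X \subset F -> Y \subset F ->
  (symdiff X Y \in cycle_space F) = (odd_vertices X == odd_vertices Y).
Proof. by move=> XF YF; rewrite inE powersetE subset_symdiff // eulerian_symdiff. Qed.

Lemma card_cycle_space F : (2 ^ #|F| <= 2 ^ n * #|cycle_space F|)%N.
Proof.
pose fiber (V : {set 'I_n}) := [set X in powerset F | odd_vertices X == V].
have card_fiber V : (#|fiber V| <= #|cycle_space F|)%N.
  have [->|[X0 X0_V]] := set_0Vmem (fiber V); first by rewrite cards0.
  rewrite -(card_imset _ (can_inj (symdiffK X0))).
  apply/subset_leq_card/subsetP => _ /imsetP[X X_V ->].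
  rewrite !inE in X_V X0_V.
  case/andP: X_V => XF /eqP oddX; case/andP: X0_V => X0F /eqP oddX0.
  by rewrite symdiff_in_cycle_space // oddX oddX0.
have -> : (2 ^ #|F| = \sum_(V in powerset [set: 'I_n]) #|fiber V|)%N.
  rewrite -card_powerset -sum1_card (partition_big odd_vertices (mem (powerset setT))).
    by apply: eq_bigr => V _; rewrite -sum1_card; apply: eq_bigl => X; rewrite !inE.
  by move=> X _; rewrite !inE subsetT.
apply: (@leq_trans (\sum_(V in powerset [set: 'I_n]) #|cycle_space F|)).
  by apply: leq_sum => V _; apply: card_fiber.
by rewrite sum_nat_const card_powerset cardsT card_ord.
Qed.

Lemma card_cycle_space_mem F e :
  (2 * #|[set X in cycle_space F | e \in X]| <= #|cycle_space F|)%N.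
Proof.
set W := cycle_space F; set We := [set X in W | e \in X].
have [->|[X0 X0_We]] := set_0Vmem We; first by rewrite cards0.
have : (#|We| <= #|W :\: We|)%N.
  rewrite -(card_imset _ (can_inj (symdiffK X0))).
  apply/subset_leq_card/subsetP => _ /imsetP[X X_We ->].
  rewrite !inE in X_We X0_We; case/andP: X_We => /andP[XF eulX] eX.
  case/andP: X0_We => /andP[X0F eulX0] eX0.
  have XX0_W : symdiff X X0 \in W.
    by rewrite symdiff_in_cycle_space // (eqP eulX) (eqP eulX0).
  have e_notin : e \notin symdiff X X0 by rewrite inE eX eX0.
  by rewrite in_setD XX0_W andbT; apply: contraNN e_notin => /setIdP[].
have WeW : We \subset W by apply/subsetP=> X; rewrite inE => /andP[].
by have := cardsID We W; rewrite (setIidPr WeW); lia.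
Qed.

Lemma sum_card_cycle_space F :
  (2 * \sum_(X in cycle_space F) #|X| <= #|F| * #|cycle_space F|)%N.
Proof.
set W := cycle_space F.
have -> : \sum_(X in W) #|X| = \sum_(e in F) #|[set X in W | e \in X]|.
  transitivity (\sum_(X in W) \sum_(e in F) (e \in X : nat)).
    apply: eq_bigr => X; rewrite inE powersetE => /andP[/subsetP XF _].
    rewrite -sum1_card big_mkcond [RHS]big_mkcond /=; apply: eq_bigr => e _.
    by case: (boolP (e \in X)) => [/XF -> | _]; last case: (e \in F).
  rewrite exchange_big; apply: eq_bigr => e _.
  rewrite -sum1_card [RHS]big_mkcond [LHS]big_mkcond; apply: eq_bigr => X _.
  by rewrite inE; case: (X \in W); case: (e \in X).
rewrite big_distrr -sum_nat_const; apply: leq_sum => e _.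
exact: card_cycle_space_mem.
Qed.

Lemma nedges_le_of_girth H g : symmetric H -> girth_ge H g ->
  (4 * (n + 3) < 7 * g)%N -> (nedges H <= n + 2)%N.
Proof.
move=> symH girthH large_g; rewrite leqNgt; apply/negP => many_edges.
have /card_gt0P[F] :
    (0 < #|[set F : {set edge} | F \subset edge_set H & #|F| == n + 3]|)%N.
  by rewrite cards_draws bin_gt0 addnS; apply: many_edges.
rewrite inE => /andP[FH /eqP cardF].
set W := cycle_space F.
have card_W : (8 <= #|W|)%N.
  by have := card_cycle_space F; rewrite cardF expnD leq_pmul2l ?expn_gt0.
have set0_W : set0 \in W.
  by rewrite !inE sub0set; apply/eqP/setP=> w; rewrite !inE /deg set0I cards0.
have lower : (g * (#|W| - 1) <= \sum_(X in W) #|X|)%N.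
  rewrite (cardsD1 set0 W) set0_W add1n subn1 /= mulnC -sum_nat_const.
  rewrite [X in (_ <= X)%N](big_setD1 set0) //=.
  rewrite cards0 add0n; apply: leq_sum => X; rewrite !inE => /andP[nz_X /andP[XF eulX]].
  by apply: girth_le_card_eulerian eulX nz_X => //; apply: subset_trans FH.
have := sum_card_cycle_space F; rewrite cardF -/W; nia.
Qed.

Definition cut S (C : {set 'I_n}) : {set edge} :=
  [set e in edge_set S | (e.1 \in C) != (e.2 \in C)].

Lemma cut_symdiff S C D : cut S (symdiff C D) = symdiff (cut S C) (cut S D).
Proof.
apply/setP=> e; rewrite !inE; case: ((e.1 < e.2)%N && _) => //=.
by case: (e.1 \in C); case: (e.2 \in C); case: (e.1 \in D); case: (e.2 \in D).
Qed.

Lemma cut_eq0_mem S C a b :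
  symmetric S -> cut S C = set0 -> S a b -> (a \in C) = (b \in C).
Proof.
move=> symS cut0; wlog lt_ab : a b / (a < b)%N => [wlog_ab Sab | Sab].
  case: (ltngtP a b) => [lt_ab | lt_ba | /val_inj-> //]; first exact: wlog_ab.
  by rewrite (wlog_ab b a) // symS.
apply/eqP; apply: contraFT (in_set0 (a, b)) => neq_ab.
by rewrite -cut0 !inE /= lt_ab Sab.
Qed.

Lemma connected_cut_eq0 S C w : symmetric S -> connected_graph S ->
  cut S C = set0 -> w \notin C -> C = set0.
Proof.
move=> symS connS cut0 w_notin_C; apply/setP=> z; rewrite inE; apply/negbTE.
apply: contra w_notin_C => z_C; have /connectP[p pS ->] := connS z w.
elim: p z z_C pS => //= y p IHp z z_C /andP[Szy pS].
by apply: IHp pS; rewrite -(cut_eq0_mem symS cut0 Szy).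
Qed.

(* The 2^(n-1) vertex sets avoiding a fixed vertex have pairwise distinct cuts. *)
Lemma connected_nedges_ge S :
  symmetric S -> connected_graph S -> (n.-1 <= nedges S)%N.
Proof.
move=> symS connS; have [n0 | /(@Ordinal n 0) w0] := posnP n.
  by apply: (@leq_trans 0); rewrite // n0.
pose D := powerset [set~ w0].
have cut_inj : {in D &, injective (cut S)}.
  move=> C1 C2; rewrite !inE => /subsetP C1w /subsetP C2w eq_cut.
  have w0_notin (C : {set 'I_n}) : {subset C <= [set~ w0]} -> w0 \notin C.
    by move=> Cw; apply/negP=> /Cw; rewrite !inE eqxx.
  apply/eqP; rewrite -symdiff_eq0; apply/eqP; apply: (connected_cut_eq0 (w := w0)) => //.
    by rewrite cut_symdiff eq_cut; apply/eqP; rewrite symdiff_eq0.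
  by rewrite inE (negbTE (w0_notin _ C1w)) (negbTE (w0_notin _ C2w)).
have : cut S @: D \subset powerset (edge_set S).
  apply/subsetP=> _ /imsetP[C _ ->]; rewrite powersetE.
  by apply/subsetP=> e; rewrite inE => /andP[].
move/subset_leq_card; rewrite card_in_imset // !card_powerset cardsC1 card_ord.
by rewrite leq_exp2l.
Qed.

End EdgeSets.

Local Open Scope ring_scope.

Theorem corollary1p13 :
  exists (c beta : rat), [/\ 0 <= c, 0 <= beta &
    exists N : nat, forall n : nat, (N <= n)%N ->
      forall k : nat, 4%:R / 7%:R * n%:R + c < k%:R ->
        approx_good 2%:R beta n k].
Proof.
exists 0, 4%:R; split=> //; exists 7%N => n n_ge7 k k_large G simpleG connG.
have {}k_large : (4 * n < 7 * k)%N by rewrite -(ltr_nat rat) !natrM; lra.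
have [H [spanH girthH]] := girth_spanner_exists simpleG (ltac:(lia) : (0 < k)%N).
have symH : symmetric H by case: spanH => [[]].
have nedgesH := nedges_le_of_girth symH girthH (ltac:(lia) : (4 * (n + 3) < 7 * k.+2)%N).
exists H; split=> // opt [[S [spanS <-]] _].
have symS : symmetric S by case: spanS => [[]].
have nedgesS := connected_nedges_ge symS (spanner_connected connG spanS).
have : (nedges H + 2 * n <= 2 * nedges S + n + 4)%N by lia.
by rewrite -(ler_nat rat) !natrD; lra.
Qed.
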